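(* Let $A$ be an additive poset, $a\in A$, and $n\ge1$ an integer. There is a bijection between chains $a=a_0<a_1<\cdots<a_n$ in $A$ of length $n$ starting at $a$ and sequences $b_1,\dots,b_n$ of $n$ pairwise independent nonzero elements of $A^a$. It sends the chain to the sequence $b_i=a_{i-1}+a_i$ ($i=1,\dots,n$), and its inverse sends $b_1,\dots,b_n$ to the chain with $a_0=a$ and $a_i=a+b_1+\cdots+b_i$ ($i=1,\dots,n$).
   Context: An additive poset is a pair $(A,\le)$ where $A$ is an abelian group and $\le$ is a partial order on $A$ such that for all $a,b,c\in A$: $(\ast)$ if $b\le a$ and $c\le a$ then $b+c\le a$; $(\ast\ast)$ if $a\le b$ and $a\le c$ then $a\le a+b+c$. Elements $a,b$ are independent if $a\le a+b$ (a symmetric relation). $A^a$ denotes the set of elements of $A$ independent from $a$. We write $x<y$ if $x\le y$ and $x\ne y$; a chain of length $n$ is a sequence $a_0<a_1<\cdots<a_n$. *)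

From HB Require Import structures.
From mathcomp Require Import all_boot all_order all_algebra.
Set Implicit Arguments. Unset Strict Implicit. Unset Printing Implicit Defensive.
Import GRing.Theory.
Local Open Scope ring_scope.

Record additive_poset (A : zmodType) (le : A -> A -> Prop) : Prop := {
  ap_refl : forall x, le x x;
  ap_antisym : forall x y, le x y -> le y x -> x = y;
  ap_trans : forall x y z, le x y -> le y z -> le x z;
  ap_star : forall a b c, le b a -> le c a -> le (b + c) a;
  ap_starstar : forall a b c, le a b -> le a c -> le a (a + b + c)
}.

Definition ap_lt (A : zmodType) (le : A -> A -> Prop) (x y : A) : Prop :=
  le x y /\ x <> y.

Definition indep (A : zmodType) (le : A -> A -> Prop) (a b : A) : Prop :=
  le a (a + b).

Definition chain_from (A : zmodType) (le : A -> A -> Prop) (a : A) (n : nat)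
  (c : nat -> A) : Prop :=
  c 0%N = a /\ forall i : nat, (i < n)%N -> ap_lt le (c i) (c i.+1).

Definition indep_seq (A : zmodType) (le : A -> A -> Prop) (a : A) (n : nat)
  (b : nat -> A) : Prop :=
  (forall i : nat, (1 <= i <= n)%N -> b i <> 0 /\ indep le a (b i)) /\
  (forall i j : nat, (1 <= i <= n)%N -> (1 <= j <= n)%N -> i <> j ->
     indep le (b i) (b j)).

Definition chain_to_seq (A : zmodType) (c : nat -> A) : nat -> A :=
  fun i => c i.-1 + c i.

Definition seq_to_chain (A : zmodType) (a : A) (b : nat -> A) : nat -> A :=
  fun i => a + \sum_(1 <= j < i.+1) b j.

From mathcomp Require Import all_boot all_algebra.
Set Implicit Arguments. Unset Strict Implicit.
Import GRing.Theory.
Local Open Scope ring_scope.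

(* Applying (star) and (starstar) to x, x, x gives x + x + x <= x <= x + x + x, hence
   x + x = 0; so a_i = a_{i-1} + b_i and the two maps are mutually inverse.  All
   order conditions come from (starstar) in the form: x <= y and x <= z make x
   independent from y + z.  Along a chain, a and each b_i = a_{i-1} + a_i lie
   below every later a_j; conversely, each partial sum a + b_1 + ... + b_i is
   independent from every later b_j, by induction on i. *)

Section AdditivePoset.
Variables (A : zmodType) (le : A -> A -> Prop).
Hypothesis HP : additive_poset le.

Lemma ap_addrr (x : A) : x + x = 0.
Proof.
have le_xx_x : le (x + x) x := ap_star HP (ap_refl HP x) (ap_refl HP x).
have le_x_xxx : le x (x + x + x) := ap_starstar HP (ap_refl HP x) (ap_refl HP x).
have le_xxx_x : le (x + x + x) x := ap_star HP le_xx_x (ap_refl HP x).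
apply: (@addIr _ x); rewrite add0r.
exact: (ap_antisym HP le_xxx_x le_x_xxx).
Qed.

Lemma ap_addKr (x y : A) : x + (x + y) = y.
Proof. by rewrite addrA ap_addrr add0r. Qed.

Lemma indep_le2 (x y z : A) : le x y -> le x z -> indep le x (y + z).
Proof. by move=> xy xz; rewrite /indep addrA; exact: (ap_starstar HP xy xz). Qed.

Lemma indep_sym (x y : A) : indep le x y -> indep le y x.
Proof.
move=> hxy; have := ap_star HP hxy (ap_refl HP (x + y)).
by rewrite ap_addKr addrC.
Qed.

Lemma indep_addl (x y z : A) :
  indep le x y -> indep le x z -> indep le y z -> indep le (x + y) z.
Proof.
move=> hxy hxz hyz; apply: (ap_star HP).
- by have := ap_starstar HP hxy hxz; rewrite ap_addKr addrCA addrA.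
- by have := ap_starstar HP (indep_sym hxy) hyz; rewrite ap_addKr addrA.
Qed.

Section Chain.
Variables (a : A) (n : nat) (c : nat -> A).
Hypothesis hc : chain_from le a n c.

Lemma chain_le (k l : nat) : (k <= l <= n)%N -> le (c k) (c l).
Proof.
elim: l => [|l IH] /andP[kl ln].
  by rewrite leqn0 in kl; rewrite (eqP kl); exact: ap_refl.
rewrite leq_eqVlt in kl; case/orP: kl => [/eqP-> | kl]; first exact: ap_refl.
apply: (ap_trans HP (IH _) (hc.2 l ln).1).
by rewrite -ltnS kl ltnW.
Qed.

Lemma chain_to_seq_neq0 (i : nat) : (1 <= i <= n)%N -> chain_to_seq c i <> 0.
Proof.
case: i => [|i] //= iN e.
apply: (hc.2 i iN).2; apply: (addrI (c i)).
by rewrite ap_addrr -e.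
Qed.

Lemma chain_to_seq_indep_base (i : nat) :
  (1 <= i <= n)%N -> indep le a (chain_to_seq c i).
Proof.
case/andP=> _ iN; rewrite -hc.1; apply: indep_le2; apply: chain_le.
  by rewrite (leq_trans (leq_pred _) iN).
by rewrite iN.
Qed.

Lemma chain_to_seq_indep (i j : nat) : (1 <= i)%N -> (i < j <= n)%N ->
  indep le (chain_to_seq c i) (chain_to_seq c j).
Proof.
move=> i1 /andP[ij jN].
have ij' : (i <= j.-1)%N by rewrite -ltnS prednK // (leq_trans _ ij).
have jN' : (j.-1 <= n)%N by rewrite (leq_trans (leq_pred _) jN).
have le_b_cj (k : nat) : (j.-1 <= k <= n)%N -> le (chain_to_seq c i) (c k).
  case/andP=> jk kN; apply: (ap_star HP); apply: chain_le.
    by rewrite (leq_trans (leq_pred _) (leq_trans ij' jk)).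
  by rewrite (leq_trans ij' jk).
by apply: indep_le2; apply: le_b_cj; rewrite ?leqnn ?leq_pred.
Qed.

Lemma chain_indep_seq : indep_seq le a n (chain_to_seq c).
Proof.
split=> [i iN | i j iN jN ne].
  by split; [exact: chain_to_seq_neq0 | exact: chain_to_seq_indep_base].
case/andP: iN => i1 iN; case/andP: jN => j1 jN.
case: (ltngtP i j) => [ij | ji | eij]; last by case: ne.
- by apply: chain_to_seq_indep; rewrite ?ij.
- by apply: indep_sym; apply: chain_to_seq_indep; rewrite ?ji.
Qed.

Lemma seq_to_chainK (i : nat) : seq_to_chain a (chain_to_seq c) i = c i.
Proof.
rewrite /seq_to_chain; elim: i => [|i IH]; first by rewrite big_geq // addr0 hc.1.
by rewrite big_nat_recr //= addrA IH ap_addKr.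
Qed.

End Chain.

Section Sequence.
Variables (a : A) (n : nat) (b : nat -> A).
Hypothesis hb : indep_seq le a n b.

Lemma seq_to_chain0 : seq_to_chain a b 0 = a.
Proof. by rewrite /seq_to_chain big_geq // addr0. Qed.

Lemma seq_to_chainS (i : nat) : seq_to_chain a b i.+1 = seq_to_chain a b i + b i.+1.
Proof. by rewrite /seq_to_chain big_nat_recr //= addrA. Qed.

Lemma seq_to_chain_indep (i j : nat) : (i < j <= n)%N ->
  indep le (seq_to_chain a b i) (b j).
Proof.
elim: i j => [|i IH] j /andP[ij jN].
  by rewrite seq_to_chain0; apply: (hb.1 j _).2; rewrite ij.
have iN : (i.+1 <= n)%N by rewrite (leq_trans (ltnW ij)).
rewrite seq_to_chainS; apply: indep_addl.
- by apply: IH; rewrite ltnSn.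
- by apply: IH; rewrite (ltn_trans (ltnSn i) ij).
- by apply: hb.2; rewrite ?iN ?jN ?(leq_trans _ ij) // => e; rewrite e ltnn in ij.
Qed.

Lemma indep_seq_chain : chain_from le a n (seq_to_chain a b).
Proof.
split=> [|i iN]; first exact: seq_to_chain0.
rewrite seq_to_chainS; split; first by apply: seq_to_chain_indep; rewrite ltnSn.
move=> e; apply: (hb.1 i.+1 _).1; first by rewrite iN.
by apply: (addrI (seq_to_chain a b i)); rewrite addr0 -e.
Qed.

Lemma chain_to_seqK (i : nat) : (1 <= i)%N ->
  chain_to_seq (seq_to_chain a b) i = b i.
Proof. by case: i => [|i] //= _; rewrite /chain_to_seq seq_to_chainS ap_addKr. Qed.

End Sequence.

End AdditivePoset.

Theorem lemma4p3 (A : zmodType) (le : A -> A -> Prop) (a : A) (n : nat) :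
  additive_poset le -> (1 <= n)%N ->
  (forall c : nat -> A, chain_from le a n c -> indep_seq le a n (chain_to_seq c)) /\
  (forall b : nat -> A, indep_seq le a n b -> chain_from le a n (seq_to_chain a b)) /\
  (forall c : nat -> A, chain_from le a n c ->
     forall i : nat, (i <= n)%N -> seq_to_chain a (chain_to_seq c) i = c i) /\
  (forall b : nat -> A, indep_seq le a n b ->
     forall i : nat, (1 <= i <= n)%N -> chain_to_seq (seq_to_chain a b) i = b i).
Proof.
move=> HP _; split; [|split; [|split]].
- by move=> c hc; exact: (chain_indep_seq HP hc).
- by move=> b hb; exact: (indep_seq_chain HP hb).
- by move=> c hc i _; exact: (seq_to_chainK HP hc i).
- by move=> b _ i /andP[i1 _]; rewrite (chain_to_seqK HP).
Qed.
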